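(* Let \[ A = \begin{bmatrix} 0 & 1 & -1 & 1 \\ 1 & 0 & 1 & 0 \\ 1 & 1 & 0 & 0 \end{bmatrix}. \] Then $A$ is totally unimodular, but its $2$-fold $I$-sum \[ I\text{-sum}_2(A) = \begin{bmatrix} I & I \\ A & 0 \\ 0 & A \end{bmatrix} \] (a $10 \times 8$ matrix, where $I$ is the $4\times 4$ identity matrix) is not totally unimodular: the $6\times 6$ submatrix $S$ formed by rows $1,4,5,7,8,9$ and columns $1,2,4,5,7,8$ of $I\text{-sum}_2(A)$ satisfies $\det S = -2$.
   Context: A matrix is totally unimodular if each of its square submatrices has determinant in $\{0,\pm 1\}$. For an integer $N \geq 1$, the $N$-fold $I$-sum of an $m \times n$ matrix $A$ is the $(mN+n) \times nN$ matrix \[ I\text{-sum}_N(A) := \begin{bmatrix} I & I & \cdots & I \\ A & & & \\ & A & & \\ & & \ddots & \\ & & & A \end{bmatrix}, \] where $I$ is the $n \times n$ identity matrix, $N$ copies of which are included in the top block row, and unspecified entries are zero. *)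

From mathcomp Require Import all_boot all_order all_algebra.
Set Implicit Arguments. Unset Strict Implicit. Unset Printing Implicit Defensive.
Import GRing.Theory Num.Theory.
Local Open Scope ring_scope.

Definition incr_sel (k m : nat) (f : 'I_k -> 'I_m) : Prop :=
  forall i j : 'I_k, (i < j)%N -> (f i < f j)%N.

Definition totally_unimodular (m n : nat) (A : 'M[int]_(m, n)) : Prop :=
  forall (k : nat) (f : 'I_k -> 'I_m) (g : 'I_k -> 'I_n),
    incr_sel f -> incr_sel g ->
    let d := \det (mxsub f g A) in d = 0 \/ d = 1 \/ d = -1.

(* The N-fold I-sum of an m x n matrix A: (m*N + n) x (n*N) matrix
   [ I I ... I ; A 0 ... 0 ; 0 A ... 0 ; ... ; 0 ... 0 A ].
   Row i < n is the top block row (identity blocks);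
   row n + r (r < m*N) is row (r mod m) of the copy of A in block (r / m). *)
Definition Isum (N m n : nat) (A : 'M[int]_(m, n)) : 'M[int]_(m * N + n, n * N) :=
  \matrix_(i < m * N + n, j < n * N)
    if (i < n)%N then (if (j %% n == i)%N then 1 else 0)
    else let r := (i - n)%N in
         if (j %/ n == r %/ m)%N then
           (if (r %% m < m)%N && (j %% n < n)%N =P true is ReflectT H then
              let: conj Ha Hb := andP H in A (Ordinal Ha) (Ordinal Hb)
            else 0)
         else 0.

Definition A0 : 'M[int]_(3, 4) :=
  \matrix_(i < 3, j < 4)
    nth 0 (nth [::] [:: [:: 0; 1; -1; 1]; [:: 1; 0; 1; 0]; [:: 1; 1; 0; 0]] i) j.

(* Selected rows 1,4,5,7,8,9 and columns 1,2,4,5,7,8 (1-indexed) as 0-indexed. *)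
Definition selRows : 'I_6 -> 'I_(3 * 2 + 4) :=
  fun i => inord (nth 0%N [:: 0; 3; 4; 6; 7; 8]%N i).
Definition selCols : 'I_6 -> 'I_(4 * 2) :=
  fun i => inord (nth 0%N [:: 0; 1; 3; 4; 6; 7]%N i).

From mathcomp Require Import all_boot all_order all_algebra.
Set Implicit Arguments. Unset Strict Implicit. Unset Printing Implicit Defensive.
Import GRing.Theory.
Local Open Scope ring_scope.

(* Both claims are finite computations.  Determinants are evaluated by
   cofactor expansion along the first row of a nat-indexed entry function,
   which reduces under [vm_compute]; total unimodularity of A0 then amounts
   to checking every minor of size at most 3, and I-sum_2(A0) fails it at
   the exhibited 6 x 6 minor of determinant -2. *)

Fixpoint laplace_det (R : pzRingType) (n : nat) (F : nat -> nat -> R) : R :=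
  if n is n'.+1 then
    foldr +%R 0 [seq F 0%N j * ((-1) ^+ j * laplace_det n' (fun i k => F i.+1 (bump j k)))
                | j <- iota 0 n]
  else 1.

Lemma det_laplace (R : comPzRingType) n (M : 'M[R]_n) (F : nat -> nat -> R) :
  (forall i j : 'I_n, M i j = F i j) -> \det M = laplace_det n F.
Proof.
elim: n M F => [|n IHn] M F MF; first by rewrite det_mx00.
rewrite (expand_det_row M ord0); cbn [laplace_det].
rewrite foldrE big_map -[iota 0 _]/(index_iota 0 n.+1) big_mkord.
apply: eq_bigr => j _; rewrite MF /cofactor add0n; congr (_ * (_ * _)).
by apply: IHn => i k; rewrite !mxE MF.
Qed.

Lemma incr_sel_injective k m (f : 'I_k -> 'I_m) : incr_sel f -> injective f.
Proof.
move=> f_incr i j fij; apply: val_inj.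
by case: (ltngtP i j) => // /f_incr; rewrite fij ltnn.
Qed.

Lemma incr_sel_leq k m (f : 'I_k -> 'I_m) : incr_sel f -> (k <= m)%N.
Proof. by move/incr_sel_injective/leq_card; rewrite !card_ord. Qed.

Lemma incr_sel_nth k m (s : seq nat) :
  size s = k -> all (fun x => x < m.+1)%N s -> sorted ltn s ->
  incr_sel (fun i : 'I_k => inord (nth 0%N s i) : 'I_m.+1).
Proof.
move=> sz_s s_lt s_sorted i j ij; rewrite !inordK ?(all_nthP 0%N s_lt) ?sz_s //.
by apply: (sorted_ltn_nth ltn_trans) => //; rewrite inE sz_s.
Qed.

Fixpoint seqs_below (k b : nat) : seq (seq nat) :=
  if k is k'.+1 then [seq x :: s | x <- iota 0 b, s <- seqs_below k' b] else [:: [::]].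

Lemma mem_seqs_below k b (s : seq nat) :
  size s = k -> all (fun x => x < b)%N s -> s \in seqs_below k b.
Proof.
elim: k s => [|k IHk] [|x s] //= [sz_s] /andP[xb sb].
by apply: allpairs_f; [rewrite mem_iota | exact: IHk].
Qed.

Definition unimodular_det (d : int) : bool := d \in [:: 0; 1; -1].

Definition minors_unimodular (m n : nat) (a : nat -> nat -> int) : bool :=
  all (fun k => all (fun rs => all (fun cs =>
         unimodular_det (laplace_det k (fun i j => a (nth 0%N rs i) (nth 0%N cs j))))
       (seqs_below k n)) (seqs_below k m)) (iota 0 (minn m n).+1).

Lemma minors_unimodularP m n (A : 'M[int]_(m, n)) (a : nat -> nat -> int) :
  (forall i j, A i j = a i j) -> minors_unimodular m n a -> totally_unimodular A.
Proof.
move=> Aa all_minors k f g f_incr g_incr /=.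
pose rs := [seq val (f i) | i <- enum 'I_k].
pose cs := [seq val (g i) | i <- enum 'I_k].
have sz_rs : size rs = k by rewrite size_map size_enum_ord.
have sz_cs : size cs = k by rewrite size_map size_enum_ord.
have nth_rs (i : 'I_k) : nth 0%N rs i = f i.
  by rewrite (nth_map i) ?size_enum_ord // nth_ord_enum.
have nth_cs (i : 'I_k) : nth 0%N cs i = g i.
  by rewrite (nth_map i) ?size_enum_ord // nth_ord_enum.
have rs_lt : all (fun x => x < m)%N rs by apply/allP => _ /mapP[i _ ->]; exact: ltn_ord.
have cs_lt : all (fun x => x < n)%N cs by apply/allP => _ /mapP[i _ ->]; exact: ltn_ord.
have k_le_min : k \in iota 0 (minn m n).+1.
  by rewrite mem_iota ltnS leq_min (incr_sel_leq f_incr) (incr_sel_leq g_incr).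
move/allP/(_ k k_le_min)/allP/(_ rs (mem_seqs_below sz_rs rs_lt)): all_minors.
move/allP/(_ cs (mem_seqs_below sz_cs cs_lt)).
rewrite -(det_laplace (M := mxsub f g A)) => [|i j]; last by rewrite mxE Aa nth_rs nth_cs.
by rewrite /unimodular_det !inE => /or3P[] /eqP ->; auto.
Qed.

Definition isum_entry (m n : nat) (a : nat -> nat -> int) (i j : nat) : int :=
  if (i < n)%N then ((j %% n)%N == i)%:R
  else if (j %/ n == (i - n) %/ m)%N then a ((i - n) %% m)%N (j %% n)%N else 0.

Lemma IsumE N m n (A : 'M[int]_(m, n)) (a : nat -> nat -> int) :
  (forall i j, A i j = a i j) -> forall i j, Isum N A i j = isum_entry m n a i j.
Proof.
move=> Aa i j; rewrite mxE /isum_entry; case: ifP => [_|i_ge_n]; first by case: eqP.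
case: ifP => // _; case: (_ =P true) => [lt_mods|]; first by case: (andP lt_mods).
have /[!muln_gt0] /andP[n_gt0 _] : (0 < n * N)%N := leq_ltn_trans (leq0n j) (ltn_ord j).
have /[!muln_gt0] /andP[m_gt0 _] : (0 < m * N)%N.
  by rewrite -(ltn_add2r n) add0n (leq_ltn_trans _ (ltn_ord i)) // leqNgt i_ge_n.
by rewrite !ltn_pmod.
Qed.

Definition a0 (i j : nat) : int :=
  nth 0 (nth [::] [:: [:: 0; 1; -1; 1]; [:: 1; 0; 1; 0]; [:: 1; 1; 0; 0]] i) j.

Lemma A0E (i : 'I_3) (j : 'I_4) : A0 i j = a0 i j.
Proof. exact: mxE. Qed.

Lemma A0_totally_unimodular : totally_unimodular A0.
Proof. by apply: minors_unimodularP A0E _; vm_compute. Qed.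

Lemma selRows_incr : incr_sel selRows.
Proof. exact: incr_sel_nth. Qed.

Lemma selCols_incr : incr_sel selCols.
Proof. exact: incr_sel_nth. Qed.

Lemma det_Isum2_A0_sel : \det (mxsub selRows selCols (Isum 2 A0)) = -2.
Proof.
rewrite (det_laplace (F := fun i j => isum_entry 3 4 a0
  (nth 0%N [:: 0; 3; 4; 6; 7; 8] i) (nth 0%N [:: 0; 1; 3; 4; 6; 7] j))); first by vm_compute.
move=> i j; rewrite mxE (IsumE A0E) /selRows /selCols !inordK //.
  by case: j => [[|[|[|[|[|[|]]]]]]].
by case: i => [[|[|[|[|[|[|]]]]]]].
Qed.

Theorem mainTheorem16 :
  totally_unimodular A0 /\
  ~ totally_unimodular (Isum 2 A0) /\
  \det (mxsub selRows selCols (Isum 2 A0)) = -2.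
Proof.
split; first exact: A0_totally_unimodular.
split; last exact: det_Isum2_A0_sel.
move=> Isum_tu; have := Isum_tu 6%N _ _ selRows_incr selCols_incr.
by rewrite /= det_Isum2_A0_sel => -[|[|]].
Qed.
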